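(* Let $n > 2k+1$. There exists a deterministic algorithm that, on every instance with $n$ elements of which $k$ are corrupted, outputs a set of exactly $2k+1$ elements containing the uncorrupted maximum, using exactly $(n-(k+1))(2k+1) = 2nk + (n - 2k^2 - 3k - 1)$ comparison queries.
   Context: Model: there are $n$ elements $x_1,\dots,x_n$, exactly $k$ of which are corrupted (unknown to the algorithm). For every pair of distinct elements the comparison graph (a tournament) specifies which one is larger. The comparison graph restricted to the $n-k$ uncorrupted elements is acyclic; comparisons involving corrupted elements may be oriented arbitrarily. The uncorrupted maximum is the uncorrupted element larger than every other uncorrupted element. An algorithm knows $n$ and $k$, may query the orientation of any pair (a comparison query), and outputs a set of elements. *)

From mathcomp Require Import all_boot.
Set Implicit Arguments. Unset Strict Implicit. Unset Printing Implicit Defensive.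

(* The comparison graph on elements 'I_n: [gt x y] means "x is larger than y". *)
Definition tournament (n : nat) (gt : rel 'I_n) : Prop :=
  (forall x, gt x x = false) /\
  (forall x y, x != y -> gt x y = ~~ gt y x).

Definition acyclic_on (n : nat) (gt : rel 'I_n) (U : {set 'I_n}) : Prop :=
  ~ (exists (x : 'I_n) (s : seq 'I_n),
        all (fun y => y \in U) (x :: s) /\ path gt x s /\ gt (last x s) x).

Definition uncorrupted_max (n : nat) (gt : rel 'I_n) (C : {set 'I_n}) (u : 'I_n) : Prop :=
  u \notin C /\ (forall v, v \notin C -> v != u -> gt u v).

(* Deterministic adaptive comparison algorithms = decision trees.
   [Query i j t f] asks the orientation of the pair (i,j) and continues with
   [t] if i is larger than j, with [f] otherwise. [Leaf S] outputs S. *)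
Inductive alg (n : nat) : Type :=
| Leaf : {set 'I_n} -> alg n
| Query : 'I_n -> 'I_n -> alg n -> alg n -> alg n.

Fixpoint output (n : nat) (gt : rel 'I_n) (A : alg n) : {set 'I_n} :=
  match A with
  | Leaf X => X
  | Query i j t f => if gt i j then output gt t else output gt f
  end.

Fixpoint queries (n : nat) (gt : rel 'I_n) (A : alg n) : nat :=
  match A with
  | Leaf _ => 0
  | Query i j t f => (if gt i j then queries gt t else queries gt f).+1
  end.

From mathcomp Require Import all_boot zify.
Set Implicit Arguments. Unset Strict Implicit. Unset Printing Implicit Defensive.

(* Insert the elements one by one into a pool of at most 2k+1 candidates,
   comparing each newcomer with the whole pool.  When the pool reaches 2k+2
   elements, its 'C(2k+2, 2) = (k+1)(2k+1) internal comparisons force some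
   element to have lost more than k of them, and that element is discarded.
   The uncorrupted maximum loses only to corrupted elements, hence at most k
   times, so it is never discarded.  The i-th insertion costs min(i, 2k+1)
   queries, and these sum to (n-(k+1))(2k+1). *)

Section Tournament.
Variables (T : eqType) (gt : rel T).
Hypotheses (gt_irr : irreflexive gt)
           (gt_tour : forall x y, x != y -> gt x y = ~~ gt y x).

Lemma count_losses_wins y Y : y \notin Y ->
  count (gt^~ y) Y + count (gt y) Y = size Y.
Proof.
move=> yY; rewrite -(count_predC (gt^~ y) Y); congr (_ + _).
apply: eq_in_count => b bY /=.
have yb : y != b by apply: contraNneq yY => ->.
exact: gt_tour.
Qed.

Lemma sum_losses X : uniq X -> \sum_(a <- X) count (gt^~ a) X = 'C(size X, 2).
Proof.
elim: X => [|y Y IH] /=; first by rewrite big_nil.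
case/andP=> yY /IH {}IH; rewrite big_cons /= gt_irr add0n big_split /= IH.
have -> : \sum_(a <- Y) gt y a = count (gt y) Y.
  by rewrite -sum1_count [RHS]big_mkcond.
by rewrite addnA count_losses_wins // binS bin1 addnC.
Qed.

Lemma has_heavy_loser k X : uniq X -> 2 * k + 1 < size X ->
  has (fun a => k < count (gt^~ a) X) X.
Proof.
move=> uX ltX; apply/negPn/hasPn => light.
have : \sum_(a <- X) count (gt^~ a) X <= \sum_(a <- X) k.
  by rewrite !big_seq; apply: leq_sum => a /light; rewrite -leqNgt.
rewrite sum_losses // big_const_seq count_predT iter_addn_0.
have := mul_bin_diag (size X) 1; rewrite bin1; nia.
Qed.

End Tournament.

Lemma count_losses_uncorrupted_max n (gt : rel 'I_n) C u X :
  tournament gt -> uncorrupted_max gt C u -> uniq X -> count (gt^~ u) X <= #|C|.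
Proof.
move=> [gt_irr gt_tour] [_ umax] uX.
apply: (@leq_trans (count (mem C) X)).
  apply: sub_count => b /= gbu; apply/negPn/negP => bC.
  have bu : b != u by apply: contraTneq gbu => ->; rewrite gt_irr.
  by move: gbu; rewrite gt_tour // umax.
rewrite -size_filter -(card_uniqP (filter_uniq _ uX)).
by apply/subset_leq_card/subsetP => b; rewrite mem_filter => /andP [].
Qed.

Lemma sum_minn m n : m <= n -> \sum_(0 <= i < n) minn i m = 'C(m, 2) + (n - m) * m.
Proof.
move=> le_mn; rewrite (@big_cat_nat _ _ _ m) //= -bin2_sum -sum_nat_const_nat.
congr (_ + _); apply: eq_big_nat => i /andP [? ?]; lia.
Qed.

Section Algorithm.
Variable n : nat.
Implicit Types (gt kn : rel 'I_n) (x : 'I_n) (S L : seq 'I_n).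

(* A decision tree carries the answers received so far as a relation [kn],
   meaningful only on the pairs already compared. *)
Definition orient kn x s (b : bool) : rel 'I_n :=
  fun a c => if (a == x) && (c == s) then b
             else if (a == s) && (c == x) then ~~ b else kn a c.

Fixpoint query_all x S kn (cont : rel 'I_n -> alg n) : alg n :=
  if S is s :: S' then
    Query x s (query_all x S' (orient kn x s true) cont)
              (query_all x S' (orient kn x s false) cont)
  else cont kn.

Fixpoint learn gt x S kn : rel 'I_n :=
  if S is s :: S' then learn gt x S' (orient kn x s (gt x s)) else kn.

Lemma output_query_all gt x S kn cont :
  output gt (query_all x S kn cont) = output gt (cont (learn gt x S kn)).
Proof. by elim: S kn => [|s S IH] kn //=; case: (gt x s). Qed.

Lemma queries_query_all gt x S kn cont :
  queries gt (query_all x S kn cont) = size S + queries gt (cont (learn gt x S kn)).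
Proof. by elim: S kn => [|s S IH] kn //=; case: (gt x s); rewrite IH addSn. Qed.

Lemma learnE gt x S kn a b : tournament gt -> x \notin S ->
  learn gt x S kn a b =
    if (a == x) && (b \in S) || (b == x) && (a \in S) then gt a b else kn a b.
Proof.
move=> [_ gt_tour]; elim: S kn => [|s S IH] kn /=; first by rewrite !in_nil !andbF.
rewrite in_cons negb_or => /andP [xs xS]; rewrite IH // /orient !in_cons.
have [->|ax] := eqVneq a x; have [->|bx] := eqVneq b x => /=.
- by rewrite (negbTE xS) (negbTE xs).
- by case: (b \in S); rewrite ?orbT ?andbF //; case: eqVneq => [->|].
- rewrite !andbT; case: (a \in S); rewrite ?orbT //.
  case: eqVneq => [->|_] //=.
  by rewrite (gt_tour s x) // eq_sym.
- by rewrite !andbF; case: (a == s).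
Qed.

Lemma learn_agree gt x S kn : tournament gt -> x \notin S -> irreflexive kn ->
  {in S &, kn =2 gt} -> {in x :: S &, learn gt x S kn =2 gt}.
Proof.
move=> gtT xS kn_irr agree a b; rewrite !inE learnE //.
have aS_x y : y \in S -> y != x by move=> yS; apply: contraNneq xS => <-.
case/predU1P=> [->|aS] /predU1P [->|bS].
- by rewrite (negbTE xS) kn_irr !andbF; case: gtT.
- by rewrite eqxx bS.
- by rewrite eqxx aS orbT.
- by rewrite (negbTE (aS_x a aS)) (negbTE (aS_x b bS)) /= agree.
Qed.

Lemma learn_irr gt x S kn : tournament gt -> x \notin S -> irreflexive kn ->
  irreflexive (learn gt x S kn).
Proof.
move=> gtT xS kn_irr a; rewrite learnE // orbb kn_irr.
by case: eqVneq => [->|] //=; rewrite (negbTE xS).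
Qed.

Variable k : nat.

Definition heavy_loser kn X (a : 'I_n) := k < count (kn^~ a) X.

Definition prune kn x S : seq 'I_n :=
  let X := x :: S in
  if 2 * k + 1 < size X then rem (nth x X (find (heavy_loser kn X) X)) X else X.

Lemma prune_agree gt kn x S : {in x :: S &, kn =2 gt} -> prune kn x S = prune gt x S.
Proof.
move=> agree; rewrite /prune; congr (if _ then rem (nth _ _ _) _ else _).
apply: eq_in_find => a aX; congr (k < _).
by apply: eq_in_count => b bX /=; apply: agree.
Qed.

Lemma prune_subset kn x S : {subset prune kn x S <= x :: S}.
Proof. by rewrite /prune; case: ifP => _ a //; apply: mem_rem. Qed.

Lemma prune_uniq kn x S : uniq (x :: S) -> uniq (prune kn x S).
Proof. by rewrite /prune; case: ifP => // _; apply: rem_uniq. Qed.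

Lemma size_prune kn x S : size S <= 2 * k + 1 ->
  size (prune kn x S) = minn (size S).+1 (2 * k + 1).
Proof.
rewrite /prune; case: ifP => [lt_kX le_Sk | /negbT + _]; last by rewrite -leqNgt /=; lia.
rewrite size_rem; first by move: lt_kX => /=; lia.
set i := find _ _.
by case: (ltnP i (size (x :: S))) => [|?]; [apply: mem_nth | rewrite nth_default ?mem_head].
Qed.

Lemma prune_keeps_max gt (C : {set 'I_n}) u x S : tournament gt -> #|C| <= k ->
  uncorrupted_max gt C u -> uniq (x :: S) -> u \in x :: S -> u \in prune gt x S.
Proof.
move=> gtT le_Ck umax uX uin; rewrite /prune; case: ifP => // lt_kX.
have [gt_irr gt_tour] := gtT.
have := nth_find x (has_heavy_loser gt_irr gt_tour uX lt_kX).
rewrite -/(heavy_loser gt (x :: S)); set v := nth _ _ _ => heavy_v.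
have vu : v != u.
  apply: contraTneq heavy_v => ->; rewrite /heavy_loser -leqNgt.
  exact: leq_trans (count_losses_uncorrupted_max gtT umax uX) le_Ck.
by rewrite (mem_rem_uniq _ uX) inE eq_sym vu.
Qed.

Fixpoint run L S kn : alg n :=
  if L is x :: L' then query_all x S kn (fun kn' => run L' (prune kn' x S) kn')
  else Leaf [set a in S].

Fixpoint candidates gt L S kn : seq 'I_n :=
  if L is x :: L' then
    let kn' := learn gt x S kn in candidates gt L' (prune kn' x S) kn'
  else S.

Lemma output_run gt L S kn : output gt (run L S kn) = [set a in candidates gt L S kn].
Proof. by elim: L S kn => [|x L IH] S kn //=; rewrite output_query_all IH. Qed.

Lemma queries_run gt L S kn p : size S = minn p (2 * k + 1) ->
  queries gt (run L S kn) = \sum_(p <= i < p + size L) minn i (2 * k + 1).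
Proof.
elim: L S kn p => [|x L IH] S kn p sizeS /=; first by rewrite addn0 big_geq.
rewrite queries_query_all -addSnnS big_ltn ?ltn_addr // sizeS (IH _ _ p.+1) //.
by rewrite size_prune sizeS ?geq_minr //; lia.
Qed.

Lemma size_candidates gt L S kn p : size S = minn p (2 * k + 1) ->
  size (candidates gt L S kn) = minn (p + size L) (2 * k + 1).
Proof.
elim: L S kn p => [|x L IH] S kn p sizeS /=; first by rewrite addn0.
by rewrite (IH _ _ p.+1) -?addSnnS // size_prune sizeS ?geq_minr //; lia.
Qed.

Lemma uniq_prune_cat kn x L S : uniq (x :: L ++ S) -> uniq (L ++ prune kn x S).
Proof.
rewrite /= mem_cat negb_or cat_uniq => /andP [/andP [xL xS] /and3P [uL dLS uS]].
rewrite cat_uniq uL prune_uniq /= ?xS ?andbT //; apply/hasPn => a /prune_subset.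
by rewrite inE => /predU1P [->|aS] //; apply: (hasPn dLS).
Qed.

Lemma uniq_candidates gt L S kn : uniq (L ++ S) -> uniq (candidates gt L S kn).
Proof. by elim: L S kn => [|x L IH] S kn //= /(uniq_prune_cat _)/IH. Qed.

Lemma candidates_keep_max gt (C : {set 'I_n}) u L S kn :
  tournament gt -> #|C| <= k -> uncorrupted_max gt C u ->
  uniq (L ++ S) -> {in S &, kn =2 gt} -> irreflexive kn -> u \in L ++ S ->
  u \in candidates gt L S kn.
Proof.
move=> gtT le_Ck umax; elim: L S kn => [|x L IH] S kn //= uLS agree kn_irr uin.
have xS : x \notin S by move: uLS; rewrite /= mem_cat negb_or => /andP [/andP []].
have uXS : uniq (x :: S) by move: uLS; rewrite /= cat_uniq xS => /and4P [].
set kn' := learn gt x S kn.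
have agree' : {in x :: S &, kn' =2 gt} by apply: learn_agree.
apply: IH; first exact: uniq_prune_cat.
- by move=> a b /prune_subset aX /prune_subset bX; apply: agree'.
- exact: learn_irr.
rewrite (prune_agree agree') mem_cat.
move: uin; rewrite inE mem_cat => /or3P [ux | -> // | uS];
  by rewrite (prune_keeps_max gtT le_Ck umax) ?orbT // inE ?ux ?uS ?orbT.
Qed.

End Algorithm.

Theorem mainTheorem4 (n k : nat) (hnk : 2 * k + 1 < n) :
  exists A : alg n,
    forall (gt : rel 'I_n) (C : {set 'I_n}),
      tournament gt -> #|C| = k -> acyclic_on gt (~: C) ->
      forall u : 'I_n, uncorrupted_max gt C u ->
        [/\ #|output gt A| = 2 * k + 1, u \in output gt A &
            queries gt A = (n - (k + 1)) * (2 * k + 1)].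
Proof.
exists (run k (enum 'I_n) [::] (fun _ _ => false)).
move=> gt C gtT cardC _ u umax.
have size0 : size ([::] : seq 'I_n) = minn 0 (2 * k + 1) by rewrite min0n.
have uniq_enum : uniq (enum 'I_n ++ [::]) by rewrite cats0 enum_uniq.
rewrite output_run (queries_run _ _ _ size0) size_enum_ord add0n.
split.
- rewrite cardsE (card_uniqP _); last exact: uniq_candidates.
  by rewrite (size_candidates _ _ _ size0) size_enum_ord; lia.
- rewrite inE (candidates_keep_max gtT _ umax) ?cardC //.
  by rewrite cats0 mem_enum.
- rewrite sum_minn 1?ltnW // bin2odd; last by rewrite addn1 /= oddM.
  by rewrite addn1 /= mul2n doubleK -mul2n; nia.
Qed.
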